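(* Let $X$, $Y_k$ ($k\in\mathbb N$) and norms $\|\cdot\|_{X\oplus Y_k}$ be as in the generalized $\ell^2$-sum setting, and let $k\in\mathbb N$. Then: (i) for $x\in X$, $y_k\in Y_k$: $\|x+y_k\|_\Sigma=\|x+y_k\|_{X\oplus Y_k}$; (ii) for $x^*\in X^*$, $y_k^*\in Y_k^*$: $\|x^*+y_k^*\|_\Sigma=\|x^*+y_k^*\|_{X\oplus Y_k}$, where the left side is the dual norm of $\|\cdot\|_\Sigma$; (iii) for $x^*\in X^*$: $\|x^*\|_\Sigma=\|x^*\|_X$.
   Context: Setting: $(X,\|\cdot\|_X)$ and $(Y_k,\|\cdot\|_{Y_k})$, $k\in\mathbb N$, are Banach spaces; for each $k$, $\|\cdot\|_{X\oplus Y_k}$ is a norm on $X\oplus Y_k$ coinciding with $\|\cdot\|_X$ on $X$ and with $\|\cdot\|_{Y_k}$ on $Y_k$, and monotone: $\|x+y_k\|_{X\oplus Y_k}\ge\|x\|_X$. Duals of direct sums are identified with direct sums of duals via $(x^*+y^* )(x+y)=x^*(x)+y^*(y)$ (so a functional on a summand is regarded as a functional on the whole sum, vanishing on the other summands). $\Lambda(X\oplus Y_k)$ is the set of functionals $x^*+\sum_k\alpha_ky_k^*$ with $x^*\in X^*$, $y_k^*\in Y_k^*$, $\|x^*+y_k^*\|_{X\oplus Y_k}\le1$ for all $k$, $0\le\alpha_k\le1$, $\sum\alpha_k^2\le1$. $\Sigma(X\oplus Y_k)=\{x+y_1+y_2+\dots:x\in X,y_k\in Y_k,\sum\|y_k\|_{Y_k}^2<\infty\}$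 with $\|z\|_\Sigma=\sup\{|z^*(z)|:z^*\in\Lambda(X\oplus Y_k)\}$; the dual norm is also denoted $\|\cdot\|_\Sigma$. *)

From HB Require Import structures.
From mathcomp Require Import all_boot all_order all_algebra.
From mathcomp Require Import all_classical all_reals all_analysis.
From Stdlib Require Import PeanoNat.
Set Implicit Arguments. Unset Strict Implicit. Unset Printing Implicit Defensive.
Import Order.TTheory GRing.Theory Num.Theory.
Import numFieldNormedType.Exports.
Local Open Scope classical_set_scope.
Local Open Scope ring_scope.

(* Real Banach spaces are [completeNormedModType R], [R : realType]. *)

Definition is_dual {R : realType} {V : normedModType R} (f : V -> R) : Prop :=
  (forall (a : R) (u v : V), f (a *: u + v) = a * f u + f v) /\ continuous f.

Definition dnorm {R : realType} {V : normedModType R} (f : V -> R) : \bar R :=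
  ereal_sup [set (`|f v|)%:E | v in [set v : V | `|v| <= 1]].

(* N is a norm on X (+) Y, written as a function of the pair (x,y) = x + y,
   coinciding with the norms of X and Y on the summands, and monotone. *)
Definition sum_norm {R : realType} {X Y : normedModType R} (N : X -> Y -> R) : Prop :=
  [/\ (forall x y, N x y = 0 -> x = 0 /\ y = 0),
      (forall (a : R) x y, N (a *: x) (a *: y) = `|a| * N x y),
      (forall x x' y y', N (x + x') (y + y') <= N x y + N x' y') &
    [/\ (forall x, N x 0 = `|x|),
      (forall y, N 0 y = `|y|) &
      (forall x y, `|x| <= N x y)]].

Definition dnorm_sum {R : realType} {X Y : normedModType R} (N : X -> Y -> R)
  (xs : X -> R) (ys : Y -> R) : \bar R :=
  ereal_sup [set (`|xs xy.1 + ys xy.2|)%:E | xy in [set xy : X * Y | N xy.1 xy.2 <= 1]].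

Section Sigma.
Context {R : realType} {X : normedModType R} {Y : nat -> normedModType R}.

(* elements of Sigma(X (+) Y_k): x + y_1 + y_2 + ..., encoded as (x, (y_k)_k) *)
Definition l2fam (y : forall k, Y k) : Prop :=
  (\sum_(k <oo) ((`|y k| ^+ 2)%:E) < +oo)%E.

Definition in_Sigma (z : X * (forall k, Y k)) : Prop := l2fam z.2.

(* the family with y in slot k and 0 elsewhere, i.e. the element x + y_k *)
Definition single (k : nat) (y : Y k) : forall j, Y j :=
  fun j => match PeanoNat.Nat.eq_dec k j with
           | left e => eq_rect k Y y j e
           | right _ => 0
           end.

(* Lambda(X (+) Y_k): functionals xs + sum_k alpha_k ys_k, encoded as
   the triple (xs, (ys k)_k, (alpha k)_k) *)
Definition in_Lambda (N : forall k, X -> Y k -> R)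
  (L : (X -> R) * (forall k, Y k -> R) * (nat -> R)) : Prop :=
  let: (xs, ys, a) := L in
  [/\ is_dual xs,
      (forall k, is_dual (ys k)),
      (forall k, (dnorm_sum (N k) xs (ys k) <= 1)%E),
      (forall k, 0 <= a k <= 1) &
      (\sum_(k <oo) ((a k ^+ 2)%:E) <= 1)%E].

Definition Lambda_eval (L : (X -> R) * (forall k, Y k -> R) * (nat -> R))
  (z : X * (forall k, Y k)) : R :=
  let: (xs, ys, a) := L in
  xs z.1 + limn (series (fun k => a k * ys k (z.2 k))).

Definition Sigma_norm (N : forall k, X -> Y k -> R) (z : X * (forall k, Y k)) : \bar R :=
  ereal_sup [set (`|Lambda_eval L z|)%:E | L in in_Lambda N].

Definition Sigma_dnorm (N : forall k, X -> Y k -> R)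
  (f : X * (forall k, Y k) -> R) : \bar R :=
  ereal_sup [set (`|f z|)%:E | z in [set z | in_Sigma z /\ (Sigma_norm N z <= 1)%E]].

End Sigma.

From HB Require Import structures.
From mathcomp Require Import all_boot all_order all_algebra.
From mathcomp Require Import all_classical all_reals all_analysis.
From mathcomp Require Import ring lra.
From Stdlib Require Import Eqdep_dec PeanoNat.
Import Order.TTheory GRing.Theory Num.Theory.
Import numFieldNormedType.Exports.
Local Open Scope classical_set_scope.
Local Open Scope ring_scope.
Set Implicit Arguments. Unset Strict Implicit. Unset Printing Implicit Defensive.

(* A functional x' + sum_j a_j y_j' of Lambda acts on x + y_k as the convex
   combination a_k (x' + y_k') + (1 - a_k) x', and both functionals have norm
   at most 1 on X (+) Y_k (the second by monotonicity), so
   ||x + y_k||_Sigma <= ||x + y_k||_{X(+)Y_k}.  Conversely, a Hahn-Banach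
   norming functional x' + y_k' of x + y_k, put in slot k with a = e_k,
   belongs to Lambda; this gives (i).  By (i), x + y_k |-> x + y_k is an
   isometric embedding, so ||x' + y_k'||_Sigma >= ||x' + y_k'||_{X(+)Y_k}; the
   reverse inequality holds because x' + y_k' divided by its norm is in
   Lambda.  (iii) is (ii) with y_k' = 0.
   Hahn-Banach is proved for sublinear p by Zorn's lemma: a minimal sublinear
   functional m below p_v(x) = inf_(t >= 0) (p (x + t v) - t p v) is linear,
   because m_y(x) = inf_(t >= 0) (m (x + t y) - t m y) is sublinear and below m,
   so minimality gives m x <= m_y x <= m (x + y) - m y. *)

Section Sublinear.
Context {R : realType} {V : lmodType R}.
Implicit Types (p q : V -> R) (x y : V).

Definition sublinear p :=
  (forall x y, p (x + y) <= p x + p y) /\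
  (forall (s : R) x, 0 <= s -> p (s *: x) = s * p x).

Lemma sublinear0 p : sublinear p -> p 0 = 0.
Proof. by case=> _ hZ; rewrite -(scale0r (0 : V)) hZ // mul0r. Qed.

Lemma sublinearN_le p : sublinear p -> forall x, - p (- x) <= p x.
Proof.
move=> hp x; have := hp.1 x (- x); rewrite subrr sublinear0 //; lra.
Qed.

Definition shift_inf p y x : R :=
  inf [set p (x + t *: y) - t * p y | t in [set t : R | 0 <= t]].

Section ShiftInf.
Variables (p : V -> R) (y : V).
Hypothesis hp : sublinear p.

Lemma shift_inf_lbound x t : 0 <= t -> - p (- x) <= p (x + t *: y) - t * p y.
Proof.
move=> t0; rewrite -hp.2 //; have := hp.1 (x + t *: y) (- x).
rewrite addrC addKr; lra.
Qed.

Lemma shift_inf_le x t : 0 <= t -> shift_inf p y x <= p (x + t *: y) - t * p y.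
Proof.
move=> t0; apply: ge_inf; last by exists t.
by exists (- p (- x)) => _ [s s0 <-]; apply: shift_inf_lbound.
Qed.

Lemma ge_shift_inf x b :
  (forall t, 0 <= t -> b <= p (x + t *: y) - t * p y) -> b <= shift_inf p y x.
Proof.
move=> hb; apply: lb_le_inf.
  by exists (p (x + 0 *: y) - 0 * p y); exists 0 => //=.
by move=> _ [t t0 <-]; exact: hb.
Qed.

Lemma shift_inf_le_self x : shift_inf p y x <= p x.
Proof. by have := shift_inf_le x (lexx 0); rewrite scale0r addr0 mul0r subr0. Qed.

Lemma shift_inf_le_sub x : shift_inf p y x <= p (x + y) - p y.
Proof. by have := shift_inf_le x ler01; rewrite scale1r mul1r. Qed.

Lemma shift_inf_subadditive x1 x2 :
  shift_inf p y (x1 + x2) <= shift_inf p y x1 + shift_inf p y x2.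
Proof.
have sum_le t1 t2 : 0 <= t1 -> 0 <= t2 -> shift_inf p y (x1 + x2) <=
    (p (x1 + t1 *: y) - t1 * p y) + (p (x2 + t2 *: y) - t2 * p y).
  move=> t10 t20; apply: le_trans (shift_inf_le _ (addr_ge0 t10 t20)) _.
  rewrite scalerDl addrACA; have := hp.1 (x1 + t1 *: y) (x2 + t2 *: y); lra.
suff : shift_inf p y (x1 + x2) - shift_inf p y x1 <= shift_inf p y x2 by lra.
apply: ge_shift_inf => t2 t20.
suff : shift_inf p y (x1 + x2) - (p (x2 + t2 *: y) - t2 * p y) <= shift_inf p y x1
  by lra.
by apply: ge_shift_inf => t1 t10; have := sum_le t1 t2 t10 t20; lra.
Qed.

Lemma shift_inf_homogeneous (s : R) x :
  0 <= s -> shift_inf p y (s *: x) = s * shift_inf p y x.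
Proof.
move=> s0; have [->|s_neq0] := eqVneq s 0.
  rewrite scale0r mul0r; apply/eqP; rewrite eq_le.
  have := shift_inf_le_self 0; have := @ge_shift_inf 0 _ (@shift_inf_lbound 0).
  by rewrite oppr0 (sublinear0 hp) oppr0 => -> ->.
have s_gt0 : 0 < s by rewrite lt_def s_neq0 s0.
apply/eqP; rewrite eq_le; apply/andP; split.
  rewrite -ler_pdivrMl //; apply: ge_shift_inf => t t0; rewrite ler_pdivrMl //.
  have := shift_inf_le (s *: x) (mulr_ge0 s0 t0).
  by rewrite -scalerA -scalerDr hp.2 // mulrBr mulrA.
apply: ge_shift_inf => t t0; rewrite -ler_pdivlMl //.
have := shift_inf_le x (divr_ge0 t0 s0).
have -> : s *: x + t *: y = s *: (x + (t / s) *: y).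
  by rewrite scalerDr scalerA mulrCA divff // mulr1.
rewrite hp.2 ?divr_ge0 // => h; rewrite mulrC; apply: le_trans h _.
by rewrite [X in _ <= X]mulrBl [s * _ / s]mulrC mulKf // [t * _ / s]mulrAC.
Qed.

Lemma shift_inf_sublinear : sublinear (shift_inf p y).
Proof. by split; [exact: shift_inf_subadditive | exact: shift_inf_homogeneous]. Qed.

End ShiftInf.

Definition pointwise_inf (C : set (V -> R)) x : R := inf [set c x | c in C].

Section ChainInf.
Variables (q0 : V -> R) (C : set (V -> R)) (c0 : V -> R).
Hypothesis Cc0 : C c0.
Hypothesis C_sub : forall c, C c -> sublinear c /\ forall x, c x <= q0 x.
Hypothesis C_chain : total_on C (fun a b => forall x, b x <= a x).

Lemma pointwise_inf_le c x : C c -> pointwise_inf C x <= c x.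
Proof.
move=> Cc; apply: ge_inf; last by exists c.
exists (- q0 (- x)) => _ [d Cd <-]; have [dsub dq0] := C_sub Cd.
by have := sublinearN_le dsub x; have := dq0 (- x); lra.
Qed.

Lemma ge_pointwise_inf b x : (forall c, C c -> b <= c x) -> b <= pointwise_inf C x.
Proof.
move=> hb; apply: lb_le_inf; first by exists (c0 x), c0.
by move=> _ [c Cc <-]; exact: hb.
Qed.

(* Subadditivity needs [C] to be a chain: the smaller of two members bounds
   both terms. *)
Lemma pointwise_inf_subadditive x y :
  pointwise_inf C (x + y) <= pointwise_inf C x + pointwise_inf C y.
Proof.
have sum_le c d : C c -> C d -> pointwise_inf C (x + y) <= c x + d y.
  move=> Cc Cd; have [dc|cd] := C_chain Cc Cd.
    apply: le_trans (pointwise_inf_le _ Cd) _.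
    by apply: le_trans ((C_sub Cd).1.1 x y) _; rewrite lerD2r.
  apply: le_trans (pointwise_inf_le _ Cc) _.
  by apply: le_trans ((C_sub Cc).1.1 x y) _; rewrite lerD2l.
suff : pointwise_inf C (x + y) - pointwise_inf C x <= pointwise_inf C y by lra.
apply: ge_pointwise_inf => d Cd.
suff : pointwise_inf C (x + y) - d y <= pointwise_inf C x by lra.
by apply: ge_pointwise_inf => c Cc; have := sum_le c d Cc Cd; lra.
Qed.

Lemma pointwise_inf_homogeneous (s : R) x :
  0 <= s -> pointwise_inf C (s *: x) = s * pointwise_inf C x.
Proof.
move=> s0; have [->|s_neq0] := eqVneq s 0.
  rewrite scale0r mul0r; apply/eqP; rewrite eq_le; apply/andP; split.
    apply: le_trans (pointwise_inf_le 0 Cc0) _.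
    by rewrite (sublinear0 (C_sub Cc0).1).
  by apply: ge_pointwise_inf => c Cc; rewrite (sublinear0 (C_sub Cc).1).
have s_gt0 : 0 < s by rewrite lt_def s_neq0 s0.
apply/eqP; rewrite eq_le; apply/andP; split.
  rewrite -ler_pdivrMl //; apply: ge_pointwise_inf => c Cc.
  by rewrite ler_pdivrMl // -(C_sub Cc).1.2 //; exact: pointwise_inf_le.
apply: ge_pointwise_inf => c Cc.
by rewrite (C_sub Cc).1.2 // ler_pM2l //; exact: pointwise_inf_le.
Qed.

Lemma pointwise_inf_sublinear : sublinear (pointwise_inf C).
Proof.
by split; [exact: pointwise_inf_subadditive | exact: pointwise_inf_homogeneous].
Qed.

End ChainInf.

Lemma exists_minimal_sublinear q0 : sublinear q0 ->
  exists2 m, sublinear m /\ (forall x, m x <= q0 x) &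
    forall q, sublinear q -> (forall x, q x <= m x) -> forall x, m x <= q x.
Proof.
move=> hq0; pose P q := sublinear q /\ forall x, q x <= q0 x.
pose T := {q : V -> R | P q}; pose top : T := exist P q0 (conj hq0 (fun=> lexx _)).
pose below (a b : T) := `[< forall x, sval b x <= sval a x >].
have [m m_max] : exists m, premaximal below m.
  apply: (@ZL_preorder T top).
  - by move=> a; apply/asboolP.
  - move=> a b c /asboolP ab /asboolP bc; apply/asboolP => x.
    exact: le_trans (bc x) (ab x).
  move=> A A_chain.
  have [[a0 Aa0]|A0] := pselect (exists a0, A a0); last first.
    by exists top => a Aa; exfalso; apply: A0; exists a.
  pose C := sval @` A.
  have C_sub c : C c -> P c by case=> a _ <-; exact: svalP.
  have C_chain : total_on C (fun a b => forall x, b x <= a x).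
    move=> _ _ [a Aa <-] [b Ab <-].
    by case: (A_chain a b Aa Ab) => /asboolP; [left|right].
  have Cc0 : C (sval a0) by exists a0.
  exists (exist P _ (conj (pointwise_inf_sublinear Cc0 C_sub C_chain)
    (fun x => le_trans (pointwise_inf_le C_sub x Cc0) ((svalP a0).2 x)))).
  by move=> a Aa; apply/asboolP => x; apply: (pointwise_inf_le C_sub); exists a.
exists (sval m); first exact: (svalP m).
move=> q hq qm.
have Pq : P q by split=> // x; exact: le_trans (qm x) ((svalP m).2 x).
by have /asboolP := m_max (exist P q Pq) (asboolT qm).
Qed.

Section MinimalSublinear.
Variable m : V -> R.
Hypotheses (hm : sublinear m)
  (m_min : forall q, sublinear q -> (forall x, q x <= m x) -> forall x, m x <= q x).

Lemma minimal_sublinear_additive x y : m (x + y) = m x + m y.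
Proof.
apply/eqP; rewrite eq_le hm.1 /=.
have := m_min (shift_inf_sublinear y hm) (shift_inf_le_self y hm) x.
have := shift_inf_le_sub y hm x; lra.
Qed.

Lemma minimal_sublinearN x : m (- x) = - m x.
Proof.
have := minimal_sublinear_additive x (- x); rewrite subrr (sublinear0 hm); lra.
Qed.

Lemma minimal_sublinear_linear (a : R) x y : m (a *: x + y) = a * m x + m y.
Proof.
rewrite minimal_sublinear_additive; congr (_ + _).
have [a0|a_lt0] := leP 0 a; first by rewrite hm.2.
by rewrite -[a]opprK scaleNr minimal_sublinearN hm.2 ?mulNr // oppr_ge0 ltW.
Qed.

End MinimalSublinear.

Theorem hahn_banach p v0 : sublinear p ->
  exists f : V -> R, [/\ forall (a : R) x y, f (a *: x + y) = a * f x + f y,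
    forall x, f x <= p x & f v0 = p v0].
Proof.
move=> hp.
have [m [hm m_le] m_min] := exists_minimal_sublinear (shift_inf_sublinear v0 hp).
exists m; split.
- exact: minimal_sublinear_linear.
- by move=> x; apply: le_trans (m_le x) (shift_inf_le_self v0 hp x).
apply/eqP; rewrite eq_le; apply/andP; split.
  exact: le_trans (m_le v0) (shift_inf_le_self v0 hp v0).
have := m_le (- v0); have := shift_inf_le_sub v0 hp (- v0).
rewrite addNr (sublinear0 hp) (minimal_sublinearN hm m_min); lra.
Qed.

End Sublinear.

Section DualFunctional.
Context {R : realType} {V : normedModType R}.
Implicit Types f : V -> R.

Lemma dual0 f : is_dual f -> f 0 = 0.
Proof. by case=> hf _; have := hf (-1) 0 0; rewrite scaler0 addr0 mulN1r addNr. Qed.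

Lemma dualZ f (a : R) u : is_dual f -> f (a *: u) = a * f u.
Proof. by move=> hf; have := hf.1 a u 0; rewrite !addr0 dual0 // addr0. Qed.

Lemma is_dual0 : is_dual (fun _ : V => 0 : R).
Proof. by split; [move=> *; rewrite mulr0 addr0 | exact: cst_continuous]. Qed.

Lemma is_dualMr f (c : R) : is_dual f -> is_dual (fun u => f u * c).
Proof.
case=> hl hc; split=> [a u v|u]; first by rewrite hl mulrDl mulrA.
by apply: cvgM; [exact: hc | exact: cvg_cst].
Qed.

Lemma is_dual_le_norm f : (forall (a : R) u v, f (a *: u + v) = a * f u + f v) ->
  (forall u, `|f u| <= `|u|) -> is_dual f.
Proof.
move=> hl hb; split=> // x; apply/cvgrPdist_lt => e e_gt0; near=> z.
have -> : f x - f z = f (x - z).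
  by have := hl (-1) z x; rewrite scaleN1r mulN1r addrC => ->; rewrite addrC.
apply: le_lt_trans (hb _) _; near: z; exact: cvgr_dist_lt.
Unshelve. all: by end_near.
Qed.

End DualFunctional.

Section SeriesSingle.
Context {R : realType}.
Variables (u : nat -> R) (k : nat).
Hypothesis u_single : forall j, j != k -> u j = 0.

Lemma series_single : limn (series u) = u k.
Proof.
apply: cvg_lim => //; apply: cvg_near_cst; near=> n.
have k_lt_n : (k < n)%N by near: n; exists k.+1.
rewrite /series /= (bigD1_seq k) ?mem_index_iota ?iota_uniq //= big1_seq ?addr0 //.
by move=> j /andP[jk _]; exact: u_single.
Unshelve. all: by end_near.
Qed.

Lemma eseries_single : (\sum_(j <oo) (u j)%:E = (u k)%:E)%E.
Proof.
apply: cvg_lim => //; apply: cvg_near_cst; near=> n.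
have k_lt_n : (k < n)%N by near: n; exists k.+1.
rewrite (bigD1_seq k) ?mem_index_iota ?iota_uniq //= big1_seq ?adde0 //.
by move=> j /andP[jk _]; rewrite u_single.
Unshelve. all: by end_near.
Qed.

End SeriesSingle.

Section SumNorm.
Context {R : realType} {X Y : normedModType R} (N : X -> Y -> R).
Hypothesis hN : sum_norm N.
Implicit Types (xs : X -> R) (ys : Y -> R).

Lemma sum_normx0 x : N x 0 = `|x|. Proof. by case: hN => _ _ _ []. Qed.
Lemma sum_norm0y y : N 0 y = `|y|. Proof. by case: hN => _ _ _ []. Qed.
Lemma sum_norm_ge_normx x y : `|x| <= N x y. Proof. by case: hN => _ _ _ []. Qed.
Lemma sum_normZ (a : R) x y : N (a *: x) (a *: y) = `|a| * N x y.
Proof. by case: hN. Qed.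

Lemma sum_norm_ge0 x y : 0 <= N x y.
Proof. exact: le_trans (sum_norm_ge_normx x y). Qed.

Lemma dnorm_sum_ub xs ys x y :
  N x y <= 1 -> ((`|xs x + ys y|)%:E <= dnorm_sum N xs ys)%E.
Proof. by move=> xy1; apply: ereal_sup_ubound; exists (x, y). Qed.

Lemma dnorm_sum_le_norm xs ys (c : R) x y : is_dual xs -> is_dual ys ->
  (dnorm_sum N xs ys <= c%:E)%E -> `|xs x + ys y| <= c * N x y.
Proof.
move=> hxs hys hc; have [Nxy0|Nxy_neq0] := eqVneq (N x y) 0.
  case: hN => N0 _ _ _; have [-> ->] := N0 _ _ Nxy0.
  by rewrite (dual0 hxs) (dual0 hys) addr0 sum_normx0 !normr0 mulr0.
have Nxy_gt0 : 0 < N x y by rewrite lt_def Nxy_neq0 sum_norm_ge0.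
have Nxy_inv : N ((N x y)^-1 *: x) ((N x y)^-1 *: y) <= 1.
  by rewrite sum_normZ ger0_norm ?mulVf // invr_ge0 ltW.
have := le_trans (dnorm_sum_ub xs ys Nxy_inv) hc.
rewrite lee_fin (dualZ _ _ hxs) (dualZ _ _ hys) -mulrDr normrM ger0_norm;
  last by rewrite invr_ge0 ltW.
by rewrite mulrC ler_pdivrMr.
Qed.

Lemma exists_norming_dual x y : exists xs, exists ys,
  [/\ is_dual xs, is_dual ys, forall u v, `|xs u + ys v| <= N u v
    & xs x + ys y = N x y].
Proof.
pose p (w : X * Y) := N w.1 w.2.
have hp : sublinear p.
  split=> [u v|s u s0]; first by case: hN => _ _ + _; exact.
  by rewrite /p sum_normZ ger0_norm.
have [f [f_lin f_le fxy]] := hahn_banach (x, y) hp.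
have f0 : f 0 = 0 by have := f_lin (-1) 0 0; rewrite scaler0 addr0 mulN1r addNr.
have fN w : f (- w) = - f w.
  by have := f_lin (-1) w 0; rewrite scaleN1r addr0 f0 addr0 mulN1r.
have f_abs w : `|f w| <= p w.
  rewrite ler_norml f_le andbT lerNl -fN.
  apply: le_trans (f_le _) _; case: w => u v; rewrite /p /=.
  by rewrite -[- u]scaleN1r -[- v]scaleN1r sum_normZ normrN normr1 mul1r.
have f_split u v : f (u, v) = f (u, 0) + f (0, v).
  have -> : (u, v) = (u, 0) + (0, v) :> X * Y.
    by congr pair; rewrite (addr0, add0r).
  by have := f_lin 1 (u, 0) (0, v); rewrite scale1r mul1r.
exists (fun u => f (u, 0)), (fun v => f (0, v)); split.
- apply: is_dual_le_norm => [a u v|u].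
    rewrite -f_lin; congr f; congr pair.
    by rewrite -[RHS]/(a *: 0 + 0) scaler0 addr0.
  by apply: le_trans (f_abs _) _; rewrite /p /= sum_normx0.
- apply: is_dual_le_norm => [a u v|v].
    rewrite -f_lin; congr f; congr pair.
    by rewrite -[RHS]/(a *: 0 + 0) scaler0 addr0.
  by apply: le_trans (f_abs _) _; rewrite /p /= sum_norm0y.
- by move=> u v; rewrite -f_split; exact: f_abs.
by rewrite -f_split.
Qed.

Lemma dnorm_sum_dual0r xs : dnorm_sum N xs (fun=> 0) = dnorm xs.
Proof.
apply/eqP; rewrite eq_le; apply/andP; split.
  apply: ge_ereal_sup => _ [[u v] /= uv1 <-]; rewrite addr0.
  apply: ereal_sup_ubound; exists u => //=.
  exact: le_trans (sum_norm_ge_normx u v) uv1.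
apply: ge_ereal_sup => _ [u /= u1 <-]; rewrite -[xs u]addr0.
by apply: (@dnorm_sum_ub xs (fun=> 0) u 0); rewrite sum_normx0.
Qed.

End SumNorm.

Unset Implicit Arguments.
Section Sigma.
Context {R : realType} {X : normedModType R} {Y : nat -> normedModType R}.
Variable N : forall k, X -> Y k -> R.
Hypothesis hN : forall k, sum_norm (N k).

Lemma single_id k (y : Y k) : single y k = y.
Proof.
by rewrite /single; case: (Nat.eq_dec k k) => [e|//]; rewrite (UIP_refl_nat _ e).
Qed.

Lemma single_ne k (y : Y k) j : j != k -> single y j = 0.
Proof.
move=> jk; rewrite /single; case: (Nat.eq_dec k j) => // e.
by subst j; rewrite eqxx in jk.
Qed.

Definition dual_single k (ys : Y k -> R) j : Y j -> R :=
  match Nat.eq_dec k j with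
  | left e => eq_rect k (fun j => Y j -> R) ys j e
  | right _ => fun=> 0
  end.

Lemma dual_single_id k (ys : Y k -> R) : dual_single k ys k = ys.
Proof.
rewrite /dual_single; case: (Nat.eq_dec k k) => [e|//].
by rewrite (UIP_refl_nat _ e).
Qed.

Lemma dual_single_ne k (ys : Y k -> R) j : j != k -> dual_single k ys j = fun=> 0.
Proof.
move=> jk; rewrite /dual_single; case: (Nat.eq_dec k j) => // e.
by subst j; rewrite eqxx in jk.
Qed.

Definition Lambda_single k (xs : X -> R) (ys : Y k -> R) :=
  (xs, dual_single k ys, fun j => (j == k)%:R : R).

Lemma Lambda_single_eval k xs (ys : Y k -> R) z :
  Lambda_eval (Lambda_single k xs ys) z = xs z.1 + ys (z.2 k).
Proof.
rewrite /Lambda_eval /= (@series_single _ _ k) ?eqxx ?mul1r ?dual_single_id //.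
by move=> j /negbTE ->; rewrite mul0r.
Qed.

Lemma in_Lambda_single k xs (ys : Y k -> R) : is_dual xs -> is_dual ys ->
  (forall x y, `|xs x + ys y| <= N k x y) -> in_Lambda N (Lambda_single k xs ys).
Proof.
move=> hxs hys xys_le; split=> // [j|j|j|].
- have [->|jk] := eqVneq j k; first by rewrite dual_single_id.
  by rewrite dual_single_ne //; exact: is_dual0.
- apply: ge_ereal_sup => _ [[x y] /= xy1 <-]; rewrite lee_fin.
  have [e|jk] := eqVneq j k.
    by subst j; rewrite dual_single_id; exact: le_trans (xys_le x y) xy1.
  rewrite dual_single_ne // addr0.
  apply: le_trans (le_trans _ (sum_norm_ge_normx (hN j) x y)) xy1.
  by have := xys_le x 0; rewrite (dual0 hys) addr0 sum_normx0.
- by case: (j == k); rewrite ?lexx ?ler01.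
by rewrite (@eseries_single _ _ k) ?eqxx ?expr1n // => j /negbTE ->; rewrite expr0n.
Qed.

Lemma Lambda_eval_le_Sigma_norm L z :
  in_Lambda N L -> ((`|Lambda_eval L z|)%:E <= Sigma_norm N z)%E.
Proof. by move=> hL; apply: ereal_sup_ubound; exists L. Qed.

Lemma Lambda_eval_single_le L k x (y : Y k) :
  in_Lambda N L -> `|Lambda_eval L (x, single y)| <= N k x y.
Proof.
case: L => [[xs ys] a] [hxs hys hd ha _].
rewrite /Lambda_eval /= (@series_single _ _ k); last first.
  by move=> j jk; rewrite single_ne // (dual0 (hys j)) mulr0.
rewrite single_id.
have xys_le := dnorm_sum_le_norm (hN k) x y hxs (hys k) (hd k); rewrite mul1r in xys_le.
have xs_le : `|xs x| <= `|x|.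
  have := dnorm_sum_le_norm (hN k) x 0 hxs (hys k) (hd k).
  by rewrite (dual0 (hys k)) addr0 mul1r sum_normx0.
have := sum_norm_ge_normx (hN k) x y; have /andP[a0 a1] := ha k.
rewrite (_ : xs x + a k * ys k y = a k * (xs x + ys k y) + (1 - a k) * xs x);
  last by ring.
move=> x_le; apply: le_trans (ler_normD _ _) _.
rewrite !normrM (ger0_norm a0) (ger0_norm (x := 1 - a k)) ?subr_ge0 //.
nra.
Qed.

Lemma Sigma_norm_single k x (y : Y k) : Sigma_norm N (x, single y) = (N k x y)%:E.
Proof.
apply/eqP; rewrite eq_le; apply/andP; split.
  by apply: ge_ereal_sup => _ [L hL <-]; rewrite lee_fin; exact: Lambda_eval_single_le.
have [xs [ys [hxs hys xys_le xys_eq]]] := exists_norming_dual (hN k) x y.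
have hL := in_Lambda_single k xs ys hxs hys xys_le.
have := Lambda_eval_le_Sigma_norm _ (x, single y) hL.
by rewrite Lambda_single_eval /= single_id xys_eq ger0_norm // sum_norm_ge0.
Qed.

Lemma in_Sigma_single k (x : X) (y : Y k) : in_Sigma (x, single y).
Proof.
rewrite /in_Sigma /l2fam /= (@eseries_single _ _ k) ?ltey // => j jk.
by rewrite single_ne // normr0 expr0n.
Qed.

Lemma Lambda_single_le_Sigma_norm k xs (ys : Y k -> R) (c : R) z :
  is_dual xs -> is_dual ys -> 0 < c ->
  (forall u v, `|xs u + ys v| <= c * N k u v) -> (Sigma_norm N z <= 1)%E ->
  `|xs z.1 + ys (z.2 k)| <= c.
Proof.
move=> hxs hys c_gt0 xys_le z1; pose d u := u * c^-1.
have norm_cV : `|c^-1| = c^-1 by rewrite gtr0_norm ?invr_gt0.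
have hL : in_Lambda N (Lambda_single k (d \o xs) (d \o ys)).
  apply: in_Lambda_single; [exact: is_dualMr|exact: is_dualMr|] => u v.
  by rewrite /d /= -mulrDl normrM norm_cV ler_pdivrMr // mulrC.
have := le_trans (Lambda_eval_le_Sigma_norm _ z hL) z1.
rewrite Lambda_single_eval /d /= -mulrDl normrM norm_cV.
by rewrite lee_fin ler_pdivrMr // mul1r.
Qed.

Lemma Sigma_dnorm_single k xs (ys : Y k -> R) : is_dual xs -> is_dual ys ->
  Sigma_dnorm N (fun z => xs z.1 + ys (z.2 k)) = dnorm_sum (N k) xs ys.
Proof.
move=> hxs hys; apply/eqP; rewrite eq_le; apply/andP; split; last first.
  apply: ge_ereal_sup => _ [[u v] /= uv1 <-]; apply: ereal_sup_ubound.
  exists (u, single v); last by rewrite /= single_id.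
  by split; [exact: in_Sigma_single | rewrite Sigma_norm_single lee_fin].
have d_ge0 : (0 <= dnorm_sum (N k) xs ys)%E.
  have := @dnorm_sum_ub _ _ _ (N k) xs ys 0 0.
  by rewrite (dual0 hxs) (dual0 hys) addr0 normr0 sum_normx0 // normr0; apply.
apply: ge_ereal_sup => _ [z [_ z1] <-].
case d_eq : (dnorm_sum (N k) xs ys) d_ge0 => [r||] //; last by move=> _; rewrite leey.
rewrite !lee_fin => r_ge0; apply/ler_addgt0Pr => e e_gt0.
apply: (Lambda_single_le_Sigma_norm k xs ys (r + e) z) => // [|u v].
  exact: ltr_wpDl.
by apply: (dnorm_sum_le_norm (hN k)) => //; rewrite d_eq lee_fin lerDl ltW.
Qed.

Lemma Sigma_dnorm_X (k : nat) (xs : X -> R) :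
  is_dual xs -> Sigma_dnorm N (fun z => xs z.1) = dnorm xs.
Proof.
move=> hxs; rewrite -(dnorm_sum_dual0r (hN k)).
rewrite -(Sigma_dnorm_single k _ _ hxs is_dual0).
by congr Sigma_dnorm; apply: funext => z; rewrite addr0.
Qed.

End Sigma.

Theorem proposition2p4 (R : realType) (X : completeNormedModType R)
  (Y : nat -> completeNormedModType R) (N : forall k, X -> Y k -> R)
  (hN : forall k, sum_norm (N k)) (k : nat) :
  [/\ (forall (x : X) (y : Y k),
         Sigma_norm N (x, single y) = (N k x y)%:E),
      (forall (xs : X -> R) (ys : Y k -> R), is_dual xs -> is_dual ys ->
         Sigma_dnorm N (fun z => xs z.1 + ys (z.2 k)) = dnorm_sum (N k) xs ys) &
      (forall xs : X -> R, is_dual xs ->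
         Sigma_dnorm N (fun z => xs z.1) = dnorm xs)].
Proof.
split=> [x y | xs ys hxs hys | xs hxs].
- exact: Sigma_norm_single.
- exact: Sigma_dnorm_single.
- exact: Sigma_dnorm_X.
Qed.
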